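(* Let $2\le k<n$ (with $n-k\ge2$... as needed for the objects to be defined), let $\mathcal{V}=[\mathcal{T}^{(1)},\ldots,\mathcal{T}^{(n)}]$ be a one-parameter array of type $(k,n)$ on $\{1,\ldots,n\}$, and let $\mathcal{V}^*$ be a one-parameter array of type $(n-k,n)$ dual to $\mathcal{V}$, i.e. $\mathcal{F}(\mathcal{V})=\mathcal{F}(\mathcal{V}^* )$ under the relabeling $s_I\leftrightarrow s_{\{1,\ldots,n\}\setminus I}$. Then for every $i=1,\ldots,n$, the hard limit $\mathcal{T}^{(i)}$ (an array of type $(k-1,n-1)$ on $\{1,\ldots,n\}\setminus\{i\}$) is dual to the soft limit $\tilde{\mathcal{V}}^*_i$ (an array of type $(n-k,n-1)$ on $\{1,\ldots,n\}\setminus\{i\}$).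
   Context: Labels carry the cyclic order $1<\cdots<n$. A planar Feynman diagram on a label set $L$ is a tree with leaves labelled by $L$, internal vertices of degree at least 3, planar for the induced cyclic order, with nonnegative internal edge lengths, giving a tree metric $d_{ab}$. For a label set $N$ with $|N|=n$ and $2\le k<n$, an array of type $(k,n)$ on $N$ assigns to every $(k-2)$-subset $\{i_1,\ldots,i_{k-2}\}\subseteq N$ a planar Feynman diagram $\mathcal{V}_{i_1\ldots i_{k-2}}$ on $N\setminus\{i_1,\ldots,i_{k-2}\}$ with metric $d^{(i_1\ldots i_{k-2})}_{ab}$, such that $\pi_{i_1\ldots i_k}:=d^{(i_1\ldots i_{k-2})}_{i_{k-1}i_k}$ is totally symmetric. Metrics are considered modulo $\pi_I\sim\pi_I+\sum_{i\in I}w_i$. A one-parameter array (ray) has metric $x\,V$ for a fixed tensor $V$ and one parameter $x>0$. Kinematic invariants of type $(k,n)$ on $N$ are real numbers $s_I$, one for each $k$-subset $I\subseteq N$, satisfying momentum conservation $\sum_{I\ni j}s_I=0$ for every $j\in N$. For a ray $\mathcal{V}$ with tensor $V$ set $\mathcal{F}(\mathcal{V}):=\sum_{|I|=k}s_I V_I$, a linear function of the kinematic invariants (well defined modulo $\sim$ thanks to momentum conservation). A ray $\mathcal{V}$ of type $(k,n)$ and a ray $\mathcal{V}^*$ of type $(n-k,n)$ on $N$ are dual if $\mathcal{F}(\mathcal{V})$ and $\mathcal{F}(\mathcal{V}^* )$ agree as functions on kinematic space after identifying $s_I$ with $s_{N\setminus I}$. Hard limit (column) on label $i$: $\mathcal{T}^{(i)}$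 is the array of type $(k-1,n-1)$ on $N\setminus\{i\}$ with $\mathcal{T}^{(i)}_{i_2\ldots i_{k-2}}:=\mathcal{V}_{i\,i_2\ldots i_{k-2}}$. Soft limit on label $i$: $\tilde{\mathcal{V}}_i$ is the array of type $(k,n-1)$ on $N\setminus\{i\}$ whose entries are the $\mathcal{V}_J$ with $i\notin J$, with the leaf $i$ removed from each diagram. *)

From HB Require Import structures.
From mathcomp Require Import all_boot all_order all_algebra.
From mathcomp Require Import reals.

Set Implicit Arguments.
Unset Strict Implicit.
Unset Printing Implicit Defensive.
Import Order.TTheory GRing.Theory Num.Theory.
Local Open Scope ring_scope.

(* Labels are the elements of 'I_n (i.e. 0 < 1 < ... < n-1, standing for
   1 < ... < n), with the cyclic order induced by the natural order.
   A label set is a subset L : {set 'I_n}. *)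

Section Diagrams.
Variable R : realType.
Variable n : nat.

Definition lin_interval (L A : {set 'I_n}) : bool :=
  [forall a, forall b, forall c,
     [&& a \in L, b \in L, c \in L, (a < b)%N, (b < c)%N, a \in A & c \in A]
       ==> (b \in A)].

Definition cyc_interval (L A : {set 'I_n}) : bool :=
  lin_interval L A || lin_interval L (L :\: A).

Definition is_min (L : {set 'I_n}) (x : 'I_n) : bool :=
  (x \in L) && [forall y in L, (x <= y)%N].

(* A split A | L\A is represented by its side not containing min L. *)
Definition normalized (L A : {set 'I_n}) : bool :=
  [forall x, is_min L x ==> (x \notin A)].

Definition norm_side (L C : {set 'I_n}) : {set 'I_n} :=
  if [exists x in C, is_min L x] then L :\: C else C.

(* nontrivial split of L, i.e. an internal edge of a tree with leaf set L *)
Definition nontriv (L A : {set 'I_n}) : bool :=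
  [&& A \subset L, (2 <= #|A|)%N & (2 <= #|L :\: A|)%N].

Definition compatible (L A B : {set 'I_n}) : bool :=
  [|| A :&: B == set0, A :&: (L :\: B) == set0,
      (L :\: A) :&: B == set0 | (L :\: A) :&: (L :\: B) == set0].

(* A (planar, metric) Feynman diagram, encoded by its split system
   (Buneman): [lam A] is the length of the internal edge inducing the
   split A | L\A (0 if there is no such edge), [pend a] the length of the
   leaf edge at a. *)
Record diagram := Diagram {
  lam : {set 'I_n} -> R;
  pend : 'I_n -> R
}.

(* D is a planar Feynman diagram on the label set L: its internal edges
   are pairwise compatible nontrivial splits of L that are cyclic
   intervals (planarity), with nonnegative lengths. *)
Definition planar_diagram (L : {set 'I_n}) (D : diagram) : Prop :=
  (forall A, 0 <= lam D A) /\
  (forall A, lam D A != 0 ->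
     [&& nontriv L A, cyc_interval L A & normalized L A]) /\
  (forall A B, lam D A != 0 -> lam D B != 0 -> compatible L A B).

Definition dist (D : diagram) (a b : 'I_n) : R :=
  if a == b then 0 else
  pend D a + pend D b +
  \sum_(A : {set 'I_n}) (if (a \in A) != (b \in A) then lam D A else 0).

(* An array assigns a diagram to every subset J (only the (k-2)-subsets
   J of N matter). *)
Definition array := {set 'I_n} -> diagram.

Definition is_array (N : {set 'I_n}) (k : nat) (V : array) : Prop :=
  [/\ (2 <= k)%N, (k < #|N|)%N,
      (forall J : {set 'I_n}, J \subset N -> #|J| = (k - 2)%N ->
                 planar_diagram (N :\: J) (V J)) &
      (forall I : {set 'I_n}, I \subset N -> #|I| = k ->
       forall a b c d, a \in I -> b \in I -> c \in I -> d \in I ->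
         a != b -> c != d ->
         dist (V (I :\: [set a; b])) a b = dist (V (I :\: [set c; d])) c d)].

(* the tensor pi_I = d^{(I \ {a,b})}_{ab} (well defined by symmetry) *)
Definition tensor (V : array) (I : {set 'I_n}) : R :=
  match [pick a in I] with
  | Some a =>
      match [pick b in I :\ a] with
      | Some b => dist (V (I :\: [set a; b])) a b
      | None => 0
      end
  | None => 0
  end.

Definition momentum (N : {set 'I_n}) (k : nat) (s : {set 'I_n} -> R) : Prop :=
  forall j, j \in N ->
    \sum_(I : {set 'I_n} | [&& I \subset N, #|I| == k & j \in I]) s I = 0.

Definition Fsum (N : {set 'I_n}) (k : nat) (V : array)
    (s : {set 'I_n} -> R) : R :=
  \sum_(I : {set 'I_n} | (I \subset N) && (#|I| == k)) s I * tensor V I.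

Definition dual (N : {set 'I_n}) (k : nat) (V Vs : array) : Prop :=
  [/\ is_array N k V, is_array N (#|N| - k) Vs &
      forall s, momentum N k s ->
        Fsum N k V s = Fsum N (#|N| - k) Vs (fun J => s (N :\: J))].

Definition hard (V : array) (i : 'I_n) : array := fun J => V (i |: J).

(* removing leaf i from a diagram on L (suppressing the degree-2 vertex:
   edges whose splits coincide after removal are merged, internal edges
   that become trivial are merged into the corresponding leaf edge) *)
Definition remove_leaf (L : {set 'I_n}) (i : 'I_n) (D : diagram) : diagram :=
  let L' := L :\ i in
  Diagram
    (fun B => if nontriv L' B then
                \sum_(A : {set 'I_n} | norm_side L' (A :\ i) == B) lam D A
              else 0)
    (fun j => pend D j +
       \sum_(A : {set 'I_n} |
               (A :\ i == [set j]) || ((L :\: A) :\ i == [set j])) lam D A).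

Definition soft (N : {set 'I_n}) (V : array) (i : 'I_n) : array :=
  fun J => remove_leaf (N :\: J) i (V J).

End Diagrams.

From HB Require Import structures.
From mathcomp Require Import all_boot all_order all_algebra.
From mathcomp Require Import reals.
From mathcomp Require Import ring zify.

Set Implicit Arguments.
Unset Strict Implicit.
Unset Printing Implicit Defensive.
Import Order.TTheory GRing.Theory Num.Theory.
Local Open Scope ring_scope.

(* Removing the leaf i from a planar tree leaves a planar tree on the remaining
   leaves with the same distances between them (an edge that stops being
   internal merges into a leaf edge, which still lies on the same paths). So the
   soft limit of V* is again an array, and its tensor on every J not containing
   i is the tensor of V* on J. The hard limit T(i) is an array whose tensor on I
   is the tensor of V on I + i.
   Given invariants s' of type (k-1, n-1) on N - i, set s_I := s'_(I - i) if
   i is in I and 0 otherwise. Then s conserves momentum: at j <> i this is the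
   conservation for s', and at j = i it says that the s'_I add up to 0, which
   holds by double counting. Duality of V and V* at s gives the claim: the left
   side is F(T(i)) at s', and on the right side only the J not containing i
   contribute, giving F of the soft limit at s'. *)

Section SetFacts.
Variable T : finType.
Implicit Types (A L N C I J : {set T}) (i a b x : T).

Lemma setDDK L C : C \subset L -> L :\: (L :\: C) = C.
Proof. by move=> sCL; rewrite setDDr setDv set0U; apply/setIidPr. Qed.

Lemma setD1D L C i : (L :\ i) :\: C = (L :\: C) :\ i.
Proof. by rewrite !setDDl setUC. Qed.

Lemma separates_setD L C a b : a \in L -> b \in L ->
  ((a \in L :\: C) != (b \in L :\: C)) = ((a \in C) != (b \in C)).
Proof.
by move=> aL bL; rewrite !inE aL bL !andbT; case: (a \in C); case: (b \in C).
Qed.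

Lemma notin_subsetD1 N J i : J \subset N :\ i -> i \notin J.
Proof. by rewrite subsetD1 => /andP[]. Qed.

Lemma notin_set2 I i a b : i \notin I -> a \in I -> b \in I -> i \notin [set a; b].
Proof.
by move=> iI aI bI; rewrite !inE negb_or; apply/andP; split; apply: contraNneq iI => ->.
Qed.

Lemma subset_setU1D1 N I i : i \in N -> I \subset N :\ i -> i |: I \subset N.
Proof. by move=> iN sI; rewrite subUset sub1set iN (subset_trans sI) ?subD1set. Qed.

Lemma setU1D I J i : i \notin J -> i |: (I :\: J) = (i |: I) :\: J.
Proof.
move=> iJ; apply/setP => x; rewrite !inE.
by case: (eqVneq x i) => [->|_]; rewrite ?(negbTE iJ).
Qed.

Lemma cardsD2 I a b : a \in I -> b \in I -> a != b ->
  #|I :\: [set a; b]| = (#|I| - 2)%N.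
Proof.
move=> aI bI ab; rewrite cardsD (setIidPr _) ?cards2 ?ab //.
by apply/subsetP => x /set2P[] ->.
Qed.

Lemma card_setD1_gt0 A i : (1 < #|A|)%N -> (0 < #|A :\ i|)%N.
Proof.
by rewrite (cardsD1 i A); case: (i \in A); rewrite ?add1n ?add0n // => /ltnW.
Qed.

Lemma set1_separates x a b : a != b ->
  (([set x] == [set a]) + ([set x] == [set b]))%N
  = ((a \in [set x]) != (b \in [set x])).
Proof.
rewrite !(inj_eq set1_inj) !inE !(eq_sym x).
by case: (a =P x) => [->|_]; case: (b =P x) => [->|_]; rewrite ?eqxx.
Qed.

Lemma big_subsets_setU1 (V : nmodType) N i (m : nat) (Q : pred {set T})
    (F : {set T} -> V) :
  i \in N ->
  \sum_(I : {set T} | [&& I \subset N, #|I| == m.+1 & Q I])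
     (if i \in I then F (I :\ i) else 0)
  = \sum_(I : {set T} | [&& I \subset N :\ i, #|I| == m & Q (i |: I)]) F I.
Proof.
move=> iN; rewrite -big_mkcondr /=.
rewrite (reindex_onto (fun I => i |: I) (fun I => I :\ i)) /=; last first.
  by move=> I /andP[_ iI]; apply: setD1K.
apply: eq_big => I; last by move=> /andP[_ /eqP ->].
rewrite setU11 andbT subsetD1 subUset sub1set iN cardsU1 /=.
have [iI|iI] := boolP (i \in I); last by rewrite setU1K // eqxx add1n eqSS !andbT.
have -> : ((i |: I) :\ i == I) = false.
  by apply/negbTE/eqP => eI; move: iI; rewrite -eI setD11.
by rewrite /= !andbF.
Qed.

End SetFacts.

Section Splits.
Variable n : nat.
Implicit Types (L A B C : {set 'I_n}) (i a b : 'I_n).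

Lemma nontrivC L C : C \subset L -> nontriv L (L :\: C) = nontriv L C.
Proof. by move=> sCL; rewrite /nontriv setDDK // subsetDl sCL /= andbC. Qed.

Lemma compatible_sym L A B : compatible L A B -> compatible L B A.
Proof.
rewrite /compatible => /or4P[] /eqP h; apply/or4P.
- by constructor 1; rewrite setIC h.
- by constructor 3; rewrite setIC h.
- by constructor 2; rewrite setIC h.
- by constructor 4; rewrite setIC h.
Qed.

Lemma compatibleCl L A B : A \subset L ->
  compatible L A B -> compatible L (L :\: A) B.
Proof.
move=> sAL; rewrite /compatible setDDK // => /or4P[] h; apply/or4P.
- by constructor 3.
- by constructor 4.
- by constructor 1.
- by constructor 2.
Qed.

Lemma compatibleD1 L A B i :
  compatible L A B -> compatible (L :\ i) (A :\ i) (B :\ i).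
Proof.
have sub (X : {set 'I_n}) : X :\ i \subset X by apply: subD1set.
have subC (X : {set 'I_n}) : (L :\ i) :\: (X :\ i) \subset L :\: X.
  by apply/subsetP => x; rewrite !inE; case: (x == i).
have disj (X Y X' Y' : {set 'I_n}) : X' \subset X -> Y' \subset Y ->
    X :&: Y == set0 -> X' :&: Y' == set0.
  by move=> sX sY; rewrite -!subset0; apply: subset_trans (setISS sX sY).
rewrite /compatible => /or4P[] h; apply/or4P.
- by constructor 1; apply: disj h.
- by constructor 2; apply: disj h.
- by constructor 3; apply: disj h.
- by constructor 4; apply: disj h.
Qed.

Lemma compatible_norm_side L A B : A \subset L -> B \subset L ->
  compatible L A B -> compatible L (norm_side L A) (norm_side L B).
Proof.
move=> sAL sBL hAB.
have hA : compatible L (norm_side L A) B.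
  by rewrite /norm_side; case: ifP => _ //; apply: compatibleCl.
apply: compatible_sym; rewrite {1}/norm_side; case: ifP => _.
  by apply: compatibleCl => //; apply: compatible_sym.
exact: compatible_sym.
Qed.

Lemma lin_intervalD1 L A i :
  lin_interval L A -> lin_interval (L :\ i) (A :\ i).
Proof.
move=> /forallP hA; apply/forallP => a; apply/forallP => b; apply/forallP => c.
move: (hA a) => /forallP /(_ b) /forallP /(_ c) /implyP hb.
apply/implyP; rewrite !inE.
move=> /and5P[/andP[_ aL] /andP[bi bL] /andP[_ cL] ab].
move=> /and3P[bc /andP[_ aA] /andP[_ cA]].
by rewrite bi hb // aL bL cL ab bc aA cA.
Qed.

Lemma cyc_intervalD1 L A i :
  cyc_interval L A -> cyc_interval (L :\ i) (A :\ i).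
Proof.
rewrite /cyc_interval; have -> : (L :\ i) :\: (A :\ i) = (L :\: A) :\ i.
  by apply/setP => x; rewrite !inE; case: (x == i).
by case/orP => /(lin_intervalD1 i) ->; rewrite ?orbT.
Qed.

Lemma cyc_interval_norm_side L C : C \subset L ->
  cyc_interval L C -> cyc_interval L (norm_side L C).
Proof.
move=> sCL; rewrite /norm_side; case: ifP => // _.
by rewrite /cyc_interval setDDK // orbC.
Qed.

Lemma is_min_inj L x y : is_min L x -> is_min L y -> x = y.
Proof.
move=> /andP[xL /forallP hx] /andP[yL /forallP hy]; apply: val_inj => /=.
by apply/eqP; rewrite eqn_leq (implyP (hx y) yL) (implyP (hy x) xL).
Qed.

Lemma normalized_norm_side L C : normalized L (norm_side L C).
Proof.
apply/forallP => x; apply/implyP => mx; rewrite /norm_side; case: ifP.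
  by move=> /existsP[y /andP[yC my]]; rewrite (is_min_inj mx my) !inE yC.
by move=> /negbT; rewrite negb_exists => /forallP /(_ x); rewrite mx andbT.
Qed.

Lemma leaf_edge_count L C a b : C \subset L -> a \in L -> b \in L -> a != b ->
  (0 < #|C|)%N -> (0 < #|L :\: C|)%N -> (2 < #|L|)%N ->
  (((C == [set a]) || (L :\: C == [set a]))
   + ((C == [set b]) || (L :\: C == [set b]))
   + (((a \in C) != (b \in C)) && nontriv L C))%N = ((a \in C) != (b \in C)).
Proof.
move=> sCL aL bL ab.
wlog le_C : C sCL / (#|C| <= #|L :\: C|)%N => [hwlog C0 CL0 L3|C0 CL0 L3].
  have [le|/ltnW le] := leqP #|C| #|L :\: C|; first exact: hwlog.
  have := hwlog _ (subsetDl L C); rewrite setDDK // nontrivC // separates_setD //.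
  by rewrite (orbC (C == _)) (orbC (C == [set b])); apply.
have not1 (X : {set 'I_n}) x : (1 < #|X|)%N -> (X == [set x]) = false.
  by move=> h; apply: contraTF h => /eqP ->; rewrite cards1.
have cardL : (#|C| + #|L :\: C|)%N = #|L| by rewrite -(cardsID C L) (setIidPr sCL).
case nt: (nontriv L C).
  by move: nt => /and3P[_ c2 cL2]; rewrite !not1 //= andbT.
have /cards1P[x eC] : #|C| == 1%N.
  move: nt; rewrite /nontriv sCL /= => /negbT; rewrite negb_and -!ltnNge.
  case/orP => h; rewrite eqn_leq C0 andbT -ltnS //.
  exact: leq_ltn_trans le_C h.
have cLC : (1 < #|L :\: C|)%N by move: L3; rewrite -cardL eC cards1 add1n ltnS.
rewrite eC in cLC *.
by rewrite !(not1 _ _ cLC) !orbF andbF addn0; apply: set1_separates.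
Qed.

End Splits.

Section RemoveLeaf.
Variables (R : realType) (n : nat).
Implicit Types (L A B C : {set 'I_n}) (i a b : 'I_n) (D : diagram R n).

Lemma lam_remove_leaf_neq0 L i D B : lam (remove_leaf L i D) B != 0 ->
  nontriv (L :\ i) B /\ exists2 A, lam D A != 0 & B = norm_side (L :\ i) (A :\ i).
Proof.
rewrite /=; case: ifP => [ntB nz|_]; last by rewrite eqxx.
split => //.
case: (pickP (fun A => (norm_side (L :\ i) (A :\ i) == B) && (lam D A != 0))).
  by move=> A /andP[/eqP <- nzA]; exists A.
move=> none; move: nz; rewrite big1 ?eqxx // => A eB.
by move: (none A); rewrite eB => /negbFE/eqP.
Qed.

Lemma remove_leaf_planar L i D :
  planar_diagram L D -> planar_diagram (L :\ i) (remove_leaf L i D).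
Proof.
case=> [lam_ge0 [lam_split lam_compat]].
have subD1 A : lam D A != 0 -> A :\ i \subset L :\ i.
  by move=> /lam_split /and3P[/and3P[sAL _ _] _ _]; apply: setSD.
split; first by move=> B /=; case: ifP => // _; apply: sumr_ge0.
split.
  move=> B /lam_remove_leaf_neq0[ntB [A nzA eB]].
  move: (lam_split A nzA) => /and3P[_ cycA _].
  rewrite ntB eB normalized_norm_side andbT cyc_interval_norm_side ?subD1 //.
  exact: cyc_intervalD1.
move=> B1 B2 /lam_remove_leaf_neq0[_ [A1 nz1 ->]] /lam_remove_leaf_neq0[_ [A2 nz2 ->]].
by apply: compatible_norm_side; rewrite ?subD1 //; apply/compatibleD1/lam_compat.
Qed.

Lemma sum_lam_remove_leaf L i D (P : pred {set 'I_n}) :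
  \sum_B (if P B then lam (remove_leaf L i D) B else 0) =
  \sum_A (if P (norm_side (L :\ i) (A :\ i))
             && nontriv (L :\ i) (norm_side (L :\ i) (A :\ i)) then lam D A else 0).
Proof.
rewrite [RHS](partition_big (fun A => norm_side (L :\ i) (A :\ i)) xpredT) //=.
apply: eq_bigr => B _.
rewrite [RHS](eq_bigr (fun A => if P B && nontriv (L :\ i) B then lam D A else 0)).
  by case: (P B); case: (nontriv (L :\ i) B); rewrite //= big1_eq.
by move=> A /eqP ->.
Qed.

Lemma dist_remove_leaf L i D a b : planar_diagram L D -> (2 < #|L :\ i|)%N ->
  a \in L :\ i -> b \in L :\ i -> dist (remove_leaf L i D) a b = dist D a b.
Proof.
move=> [_ [lam_split _]] cardL aL bL; rewrite /dist; case: eqP => // /eqP ab /=.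
rewrite sum_lam_remove_leaf; set L' := L :\ i.
(* After removing i, the edge A of D either stays internal or becomes part of a
   leaf edge; either way it counts in d_ab iff it separates a from b. *)
suff per_split A :
    (if (A :\ i == [set a]) || ((L :\: A) :\ i == [set a]) then lam D A else 0)
  + (if (A :\ i == [set b]) || ((L :\: A) :\ i == [set b]) then lam D A else 0)
  + (if ((a \in norm_side L' (A :\ i)) != (b \in norm_side L' (A :\ i)))
        && nontriv L' (norm_side L' (A :\ i)) then lam D A else 0)
  = if (a \in A) != (b \in A) then lam D A else 0.
  rewrite -(eq_bigr _ (fun A _ => per_split A)) !big_split /= -!big_mkcond /=.
  ring.
have [->|nzA] := eqVneq (lam D A) 0; first by rewrite !if_same !addr0.
have /and3P[/and3P[sAL cA cLA] _ _] := lam_split A nzA.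
have := card_setD1_gt0 i cA; have := card_setD1_gt0 i cLA.
have -> : (L :\: A) :\ i = L' :\: (A :\ i).
  by apply/setP => x; rewrite !inE; case: (x == i).
set C := A :\ i => cLC cC.
have sCL : C \subset L' by apply: setSD.
have memC x : x \in L' -> (x \in A) = (x \in C) by rewrite !inE => /andP[-> _].
have -> : ((a \in norm_side L' C) != (b \in norm_side L' C)) = ((a \in C) != (b \in C)).
  by rewrite /norm_side; case: ifP => // _; apply: separates_setD.
have -> : nontriv L' (norm_side L' C) = nontriv L' C.
  by rewrite /norm_side; case: ifP => // _; apply: nontrivC.
rewrite (memC a aL) (memC b bL) -!mulrb -!mulrnDr.
by congr (_ *+ _); apply: leaf_edge_count.
Qed.

End RemoveLeaf.

Section Arrays.
Variables (R : realType) (n : nat).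
Implicit Types (N I J : {set 'I_n}) (i a b : 'I_n) (V W Vs : array R n)
  (s : {set 'I_n} -> R).

Definition dist_symmetric V I : Prop :=
  forall a b c d, a \in I -> b \in I -> c \in I -> d \in I -> a != b -> c != d ->
  dist (V (I :\: [set a; b])) a b = dist (V (I :\: [set c; d])) c d.

Definition lift_invariants i s : {set 'I_n} -> R :=
  fun I => if i \in I then s (I :\ i) else 0.

Lemma tensor_congr V W I :
  (forall a b, a \in I -> b \in I -> a != b ->
     dist (W (I :\: [set a; b])) a b = dist (V (I :\: [set a; b])) a b) ->
  tensor W I = tensor V I.
Proof.
move=> eqWV; rewrite /tensor; case: pickP => // a aI; case: pickP => // b.
by rewrite in_setD1 => /andP[ba bI]; apply: eqWV; rewrite // eq_sym.
Qed.

Lemma tensor_dist V I a b : dist_symmetric V I ->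
  a \in I -> b \in I -> a != b -> tensor V I = dist (V (I :\: [set a; b])) a b.
Proof.
move=> symV aI bI ab; rewrite /tensor.
case: pickP => [c cI|/(_ a)]; last by rewrite aI.
case: pickP => [d|none].
  by rewrite in_setD1 => /andP[dc dI]; apply: symV; rewrite // eq_sym.
have [ac|ac] := eqVneq a c.
  by move: (none b); rewrite in_setD1 bI -ac eq_sym ab.
by move: (none a); rewrite in_setD1 aI ac.
Qed.

Lemma dist_symmetric_hard V I i : i \notin I ->
  dist_symmetric V (i |: I) -> dist_symmetric (hard V i) I.
Proof.
move=> iI symV a b c d aI bI cI dI ab cd.
rewrite /hard !setU1D ?(notin_set2 iI) //.
by apply: symV; rewrite ?setU1r.
Qed.

Lemma tensor_hard V I i : i \notin I -> (1 < #|I|)%N ->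
  dist_symmetric V (i |: I) -> tensor (hard V i) I = tensor V (i |: I).
Proof.
move=> iI /card_gt1P[a [b [aI bI ab]]] symV.
rewrite (tensor_dist (dist_symmetric_hard iI symV) aI bI ab).
by rewrite (tensor_dist symV _ _ ab) ?setU1r // /hard setU1D ?(notin_set2 iI).
Qed.

Lemma is_array_hard N k V i : is_array N k.+1 V -> i \in N -> (2 <= k)%N ->
  is_array (N :\ i) k (hard V i).
Proof.
move=> [_ kN planarV symV] iN k2; split => //.
- by move: kN; rewrite (cardsD1 i N) iN add1n ltnS.
- move=> J sJ cJ; have iJ := notin_subsetD1 sJ.
  rewrite setDDl; apply: planarV; first exact: subset_setU1D1.
  by rewrite cardsU1 iJ cJ /=; lia.
- move=> I sI cI; apply: dist_symmetric_hard (notin_subsetD1 sI) _.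
  apply: symV; first exact: subset_setU1D1.
  by rewrite cardsU1 (notin_subsetD1 sI) cI.
Qed.

Lemma dist_soft N m Vs i J a b : is_array N m Vs -> i \in N -> (m.+2 <= #|N|)%N ->
  J \subset N :\ i -> #|J| = m -> a \in J -> b \in J -> a != b ->
  dist (soft N Vs i (J :\: [set a; b])) a b = dist (Vs (J :\: [set a; b])) a b.
Proof.
move=> [m2 _ planarVs _] iN mN sJ cJ aJ bJ ab.
have iJ := notin_subsetD1 sJ.
have sJN : J \subset N by apply: subset_trans sJ (subD1set N i).
set X := J :\: [set a; b].
have sXN : X \subset N by apply: subset_trans (subsetDl J _) sJN.
have cX : #|X| = (m - 2)%N by rewrite cardsD2 // cJ.
have memL x : x \in J -> x \in [set a; b] -> x \in (N :\: X) :\ i.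
  move=> xJ xab; rewrite in_setD1 !in_setD xab (subsetP sJN x xJ) /= andbT.
  by apply: contraNneq iJ => <-.
apply: dist_remove_leaf; first exact: planarVs.
- have iX : i \notin X by apply: contra iJ => /setDP[].
  have := cardsD1 i (N :\: X); rewrite inE iX iN (cardsD N X) (setIidPr sXN) cX.
  (* The two cardinals below occur with different but convertible finType
     instances, which lia would treat as unrelated atoms. *)
  rewrite /=; set c := #|(N :\: X) :\ i|; set d := #|N| in mN *; lia.
- by apply: memL; rewrite ?set21.
- by apply: memL; rewrite ?set22.
Qed.

Lemma is_array_soft N m Vs i : is_array N m Vs -> i \in N -> (m.+2 <= #|N|)%N ->
  is_array (N :\ i) m (soft N Vs i).
Proof.
move=> arrVs iN mN; have [m2 _ planarVs symVs] := arrVs; split => //.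
- by move: mN; rewrite (cardsD1 i N) iN add1n ltnS.
- move=> J sJ cJ; rewrite /soft setD1D; apply: remove_leaf_planar.
  by apply: planarVs; rewrite ?(subset_trans sJ) ?subD1set.
- move=> I sI cI a b c d aI bI cI' dI ab cd.
  rewrite !(dist_soft arrVs) //.
  by apply: symVs; rewrite ?(subset_trans sI) ?subD1set.
Qed.

Lemma tensor_soft N m Vs i J : is_array N m Vs -> i \in N -> (m.+2 <= #|N|)%N ->
  J \subset N :\ i -> #|J| = m -> tensor (soft N Vs i) J = tensor Vs J.
Proof.
by move=> arrVs iN mN sJ cJ; apply: tensor_congr => a b; apply: (dist_soft arrVs).
Qed.

End Arrays.

Section Kinematics.
Variables (R : realType) (n : nat).
Implicit Types (N I J : {set 'I_n}) (i : 'I_n) (V Vs : array R n)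
  (s : {set 'I_n} -> R).

Lemma momentum_sum_eq0 N m s : (0 < m)%N -> momentum N m s ->
  \sum_(I : {set 'I_n} | (I \subset N) && (#|I| == m)) s I = 0.
Proof.
move=> m_gt0 ms.
(* Summing the conservation laws over j in N counts every s_I exactly m times. *)
have : m%:R * \sum_(I : {set 'I_n} | (I \subset N) && (#|I| == m)) s I = 0.
  rewrite mulr_sumr; transitivity
    (\sum_(I : {set 'I_n} | (I \subset N) && (#|I| == m)) \sum_(j in I) s I).
    by apply: eq_bigr => I /andP[_ /eqP cI]; rewrite sumr_const cI mulr_natl.
  rewrite (exchange_big_dep (mem N)) /=; last first.
    by move=> I j /andP[/subsetP sI _] /sI.
  apply: big1 => j jN; apply: etrans (ms j jN).
  by apply: eq_bigl => I; rewrite andbA.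
by move/eqP; rewrite mulf_eq0 pnatr_eq0 eqn0Ngt m_gt0 => /eqP.
Qed.

Lemma momentum_lift N m i s : i \in N -> (0 < m)%N ->
  momentum (N :\ i) m s -> momentum N m.+1 (lift_invariants i s).
Proof.
move=> iN m_gt0 ms j jN; rewrite /lift_invariants.
apply: etrans (big_subsets_setU1 _ _ _ iN) _.
have [->|ji] := eqVneq j i.
  under eq_bigl do rewrite setU11 andbT.
  exact: momentum_sum_eq0.
under eq_bigl do rewrite in_setU1 (negbTE ji) /=.
by apply: ms; rewrite !inE ji jN.
Qed.

Lemma Fsum_lift_hard N k V i s : is_array N k.+1 V -> i \in N -> (2 <= k)%N ->
  Fsum N k.+1 V (lift_invariants i s) = Fsum (N :\ i) k (hard V i) s.
Proof.
move=> [_ _ _ symV] iN k2; rewrite /Fsum.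
rewrite (eq_bigl (fun I => [&& I \subset N, #|I| == k.+1 & true])); last first.
  by move=> I; rewrite andbT.
rewrite (eq_bigr (fun I => if i \in I then s (I :\ i) * tensor V (i |: (I :\ i))
                          else 0)); last first.
  by move=> I _; rewrite /lift_invariants; case: ifP => [iI|_]; rewrite ?mul0r ?setD1K.
apply: etrans (big_subsets_setU1 _ xpredT (fun J => s J * tensor V (i |: J)) iN) _.
apply: eq_big => [I|I /and3P[sI /eqP cI _]].
  by rewrite andbT.
have iI := notin_subsetD1 sI.
have symVI : dist_symmetric V (i |: I).
  by apply: symV; [exact: subset_setU1D1 | rewrite cardsU1 iI cI].
by rewrite tensor_hard // cI.
Qed.

Lemma Fsum_lift_soft N m Vs i s : is_array N m Vs -> i \in N -> (m.+2 <= #|N|)%N ->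
  Fsum N m Vs (fun J => lift_invariants i s (N :\: J))
  = Fsum (N :\ i) m (soft N Vs i) (fun J => s ((N :\ i) :\: J)).
Proof.
move=> arrVs iN mN; rewrite /Fsum (bigID (fun J => i \in J)) /= big1 ?add0r; last first.
  by move=> J /andP[_ iJ]; rewrite /lift_invariants inE iJ mul0r.
apply: eq_big => [J|J /andP[/andP[sJ /eqP cJ] iJ]]; first by rewrite subsetD1 andbAC.
rewrite /lift_invariants inE iJ iN setD1D (tensor_soft arrVs) //.
by rewrite subsetD1 sJ.
Qed.

End Kinematics.

Theorem theorem3p1 (R : realType) (n k : nat) (V Vs : array R n) :
  (3 <= k)%N -> (k + 2 <= n)%N ->
  dual [set: 'I_n] k V Vs ->
  forall i : 'I_n,
    dual ([set: 'I_n] :\ i) (k - 1) (hard V i) (soft [set: 'I_n] Vs i).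
Proof.
move=> k3 kn [arrV arrVs eqF] i.
have iN : i \in [set: 'I_n] := in_setT i.
have cardN : #|[set: 'I_n]| = n by rewrite cardsT card_ord.
have cardNi : #|[set: 'I_n] :\ i|.+1 = n.
  by rewrite -[RHS]cardN (cardsD1 i [set: 'I_n]) iN.
rewrite cardN in arrVs eqF.
case: k k3 kn arrV arrVs eqF => // k k3 kn arrV arrVs eqF.
rewrite subn1 /=.
have cardD : (#|[set: 'I_n] :\ i| - k = n - k.+1)%N by rewrite -[in RHS]cardNi subSS.
have mN : ((n - k.+1).+2 <= #|[set: 'I_n]|)%N by rewrite cardN; lia.
split; [exact: is_array_hard | rewrite cardD; exact: is_array_soft |].
move=> s ms; rewrite cardD -Fsum_lift_hard // eqF; first exact: Fsum_lift_soft.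
exact: momentum_lift iN (ltnW k3) ms.
Qed.
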